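(* Let $r>0$ and let $k\ge3$ be an integer. Set $y_1:=0$ and for integers $0\le m<k$ define $$C_{m,k,r}:=\int_0^\infty\!dy_2\int_{y_2}^\infty\!dy_3\cdots\int_{y_m}^\infty\!dy_{m+1}\,e^{-ry_{m+1}}\int_0^{y_{m+1}+(m+1)}\!dy_{m+2}\int_0^{y_{m+2}+1}\!dy_{m+3}\cdots\int_0^{y_{k-1}+1}\!dy_k$$ (where for $m=0$ the outer integrals are absent and $y_{m+1}=y_1=0$, and for $m=k-1$ the inner integrals are absent). Then $$C_{m,k,r}\le c\Bigl(\frac{2(\mathrm er+1)}{r}\Bigr)^{k-1}(\mathrm er+1)^{-m},\qquad c:=\mathrm e^{2+1/12}/2.$$ *)

From HB Require Import structures.
From mathcomp Require Import all_boot all_order all_algebra.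
From mathcomp Require Import all_classical all_reals all_analysis.
Set Implicit Arguments. Unset Strict Implicit. Unset Printing Implicit Defensive.
Import Order.TTheory GRing.Theory Num.Theory.
Import numFieldNormedType.Exports.
Local Open Scope classical_set_scope.
Local Open Scope ring_scope.
Local Open Scope ereal_scope.

Section Cmkr.
Variable R : realType.

Fixpoint Finner (n : nat) (y : R) : \bar R :=
  match n with
  | 0%N => 1
  | n'.+1 => \int[@lebesgue_measure R]_(z in `[0%R, (y + 1)%R]) Finner n' z
  end.

(* the inner block  \int_0^{y_{m+1}+(m+1)} dy_{m+2} \int_0^{y_{m+2}+1} ... dy_k,
   i.e. (k-1-m) nested integrals; equal to 1 if m = k-1 *)
Definition innerC (k m : nat) (y : R) : \bar R :=
  match (k - 1 - m)%N with
  | 0%N => 1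
  | n.+1 => \int[@lebesgue_measure R]_(z in `[0%R, (y + (m.+1)%:R)%R]) Finner n z
  end.

Fixpoint outerC (k m : nat) (r : R) (n : nat) (y : R) : \bar R :=
  match n with
  | 0%N => (expR (- (r * y)))%:E * innerC k m y
  | n'.+1 => \int[@lebesgue_measure R]_(z in `[y, +oo[) outerC k m r n' z
  end.

(* C_{m,k,r}, with y_1 = 0 and m outer integrals over y_2, ..., y_{m+1} *)
Definition Cmkr (m k : nat) (r : R) : \bar R := outerC k m r m 0%R.

End Cmkr.

(* Fix a rate 0 < t < r.  Every inner integral is bounded by an exponential
   e^{t y} in its upper variable: integrating e^{t z} over [0, y + 1] costs a
   factor e^t / t, and the initial shift y + (m + 1) a further e^{t m}.  Against
   the weight e^{-r y}, each of the m outer integrals over [y, oo[ then acts on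
   e^{-(r - t) y} and contributes a factor 1 / (r - t).  The choice
   t = r / (e r + 2) gives r - t = t (e r + 1), and e^t (1 - t) <= 1 turns
   e^t / t into the bound 2 (e r + 1) / r; the constant c is at least 1. *)
From HB Require Import structures.
From mathcomp Require Import all_boot all_order all_algebra.
From mathcomp Require Import all_classical all_reals all_analysis.
From mathcomp Require Import ring lra zify.
Import Order.TTheory GRing.Theory Num.Theory.
Import numFieldNormedType.Exports.
Local Open Scope classical_set_scope.
Local Open Scope ring_scope.

(* The integral of a nonnegative function is a supremum over simple minorants,
   so monotonicity needs no measurability. *)
Lemma ge0_le_integral_nonmeasurable d (T : measurableType d) (R : realType)
    (mu : {measure set T -> \bar R}) (D : set T) (f g : T -> \bar R) :
  (forall x, D x -> (0 <= f x)%E) -> (forall x, D x -> (f x <= g x)%E) ->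
  (\int[mu]_(x in D) f x <= \int[mu]_(x in D) g x)%E.
Proof.
move=> f0 fg.
have g0 x : D x -> (0 <= g x)%E by move=> Dx; exact: le_trans (f0 _ Dx) (fg _ Dx).
rewrite ge0_integralE // ge0_integralE //.
apply: ereal_sup_le => _ [h hf <-]; exists h => //= x.
apply: le_trans (hf x) _; rewrite !patchE; case: ifP => // /set_mem Dx.
exact: fg.
Qed.

Section exponential_integrals.
Variable R : realType.
Local Notation mu := (@lebesgue_measure R).

Lemma is_derive_scale_expR (c B z : R) :
  is_derive z 1 (fun x => B * expR (c * x)) (B * (c * expR (c * z))).
Proof.
have dcx : is_derive z 1 (fun x : R => c * x) c.
  by apply: is_derive_eq; rewrite /GRing.scale/= mulr1.
have dexp := is_derive1_comp (is_derive_expR (c * z)) dcx.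
rewrite (mulrC c); exact: is_deriveZ.
Qed.

Lemma continuous_scale_expR (c B : R) : continuous (fun x : R => B * expR (c * x)).
Proof.
move=> z; apply: differentiable_continuous; apply/derivable1_diffP.
by have [] := is_derive_scale_expR c B z.
Qed.

Lemma derive1_scale_expR (c B z : R) :
  derive1 (fun x => B * expR (c * x)) z = B * (c * expR (c * z)).
Proof.
by rewrite derive1E; have [] := is_derive_scale_expR c B z.
Qed.

Lemma integral_itv0_scale_expR (t B x : R) : t != 0 -> 0 < x ->
  (\int[mu]_(z in `[0%R, x]) (B * expR (t * z))%:E =
   (B / t * (expR (t * x) - 1))%:E)%E.
Proof.
move=> t0 x0.
have -> : B / t * (expR (t * x) - 1) = B / t * expR (t * x) - B / t * expR (t * 0).
  by rewrite mulr0 expR0 mulrBr mulr1.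
rewrite EFinB.
apply: (@continuous_FTC2 _ _ (fun z => B / t * expR (t * z))) => //.
- by apply: continuous_subspaceT => z; exact: continuous_scale_expR.
- split.
  + by move=> z _; have [] := is_derive_scale_expR t (B / t) z.
  + by apply: cvg_at_right_filter; exact: continuous_scale_expR.
  + by apply: cvg_at_left_filter; exact: continuous_scale_expR.
- by move=> z _; rewrite derive1_scale_expR mulrA divfK.
Qed.

Lemma integral_itvy_scale_expRN (a B y : R) : 0 < a -> 0 <= B ->
  (\int[mu]_(z in `[y%R, +oo[) (B * expR (- a * z))%:E =
   (B / a * expR (- a * y))%:E)%E.
Proof.
move=> a0 B0.
have F_cvg0 : (fun x => - (B / a) * expR (- a * x)) x @[x --> +oo%R] --> (0 : R).
  rewrite -(mulr0 (- (B / a))); apply: cvgM; first exact: cvg_cst.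
  rewrite (_ : (fun x => expR (- a * x)) = (fun z => expR (- z)) \o ( *%R a)).
    apply: (@cvg_comp _ _ _ _ _ _ (pinfty_nbhs R)); first exact: gt0_cvgMry.
    exact: cvgr_expR.
  by apply: eq_fun => x; rewrite mulNr.
rewrite (@ge0_continuous_FTC2y _ _ (fun x => - (B / a) * expR (- a * x)) _ 0).
- by rewrite sub0e -EFinN mulNr opprK.
- by move=> x _; rewrite mulr_ge0 ?expR_ge0.
- by apply: continuous_subspaceT => z; exact: continuous_scale_expR.
- exact: F_cvg0.
- by move=> z _; have [] := is_derive_scale_expR (- a) (- (B / a)) z.
- by apply: cvg_at_right_filter; exact: continuous_scale_expR.
- by move=> z _; rewrite derive1_scale_expR mulrA mulNr mulrN opprK divfK ?gt_eqF.
Qed.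

Lemma integral_itv0_le_expR (F : R -> \bar R) (t A s : R) :
  0 < t -> 0 <= A -> 0 < s ->
  (forall z, (0 <= z)%R -> 0 <= F z <= (A * expR (t * z))%:E)%E ->
  (\int[mu]_(z in `[0%R, s]) F z <= (A / t * expR (t * s))%:E)%E.
Proof.
move=> t_gt0 A_ge0 s_gt0 FA.
apply: (@le_trans _ _ (\int[mu]_(z in `[0%R, s]) (A * expR (t * z))%:E)%E).
  apply: ge0_le_integral_nonmeasurable => z; rewrite /= in_itv /= => /andP[z0 _].
    by case/andP: (FA z z0).
  by case/andP: (FA z z0).
rewrite integral_itv0_scale_expR ?gt_eqF // lee_fin mulrBr lerBlDr lerDl mulr1.
by rewrite divr_ge0 // ltW.
Qed.

Lemma integral_itvy_le_expRN (F : R -> \bar R) (a A y : R) : 0 < a -> 0 <= A ->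
  (forall z, (y <= z)%R -> 0 <= F z <= (A * expR (- a * z))%:E)%E ->
  (\int[mu]_(z in `[y%R, +oo[) F z <= (A / a * expR (- a * y))%:E)%E.
Proof.
move=> a_gt0 A_ge0 FA.
rewrite -integral_itvy_scale_expRN //.
apply: ge0_le_integral_nonmeasurable => z; rewrite /= in_itv /= andbT => yz.
  by case/andP: (FA z yz).
by case/andP: (FA z yz).
Qed.

End exponential_integrals.

Section nested_integral_bounds.
Context {R : realType} {t : R}.
Hypothesis t_gt0 : 0 < t.

Lemma Finner_ge0 n (y : R) : (0 <= Finner n y)%E.
Proof.
elim: n y => [|n IH] y /=; first exact: lee01.
by apply: integral_ge0 => z _; exact: IH.
Qed.

Lemma Finner_le n (y : R) : 0 <= y ->
  (Finner n y <= ((expR t / t) ^+ n * expR (t * y))%:E)%E.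
Proof.
elim: n y => [|n IH] y y_ge0 /=.
  by rewrite expr0 mul1r lee_fin -[1]expR0 ler_expR mulr_ge0 // ltW.
apply: le_trans (@integral_itv0_le_expR _ _ t ((expR t / t) ^+ n) _ t_gt0 _ _ _) _.
- by rewrite exprn_ge0 // divr_ge0 ?expR_ge0 // ltW.
- by rewrite ltr_wpDl.
- by move=> z z0; rewrite Finner_ge0 IH.
rewrite lee_fin exprSr mulrDr mulr1 expRD le_eqVlt; apply/orP; left; apply/eqP.
by field; rewrite gt_eqF.
Qed.

Lemma innerC_ge0 k m (y : R) : (0 <= innerC k m y)%E.
Proof.
rewrite /innerC; case: (k - 1 - m)%N => [|n]; first exact: lee01.
by apply: integral_ge0 => z _; exact: Finner_ge0.
Qed.

Lemma innerC_le k m (y : R) : 0 <= y ->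
  (innerC k m y <= ((expR t / t) ^+ (k - 1 - m) * expR t ^+ m * expR (t * y))%:E)%E.
Proof.
move=> y_ge0; rewrite /innerC; case: (k - 1 - m)%N => [|n].
  rewrite expr0 mul1r lee_fin mulr_ege1 ?exprn_ege1 //.
    by rewrite -[1]expR0 ler_expR ltW.
  by rewrite -[1]expR0 ler_expR mulr_ge0 // ltW.
apply: le_trans (@integral_itv0_le_expR _ _ t ((expR t / t) ^+ n) _ t_gt0 _ _ _) _.
- by rewrite exprn_ge0 // divr_ge0 ?expR_ge0 // ltW.
- by rewrite ltr_wpDl.
- by move=> z z0; rewrite Finner_ge0 Finner_le.
rewrite lee_fin mulrDr expRD (mulrC t (m.+1)%:R) expRM_natl !exprSr le_eqVlt.
apply/orP; left; apply/eqP.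
by field; rewrite gt_eqF.
Qed.

Context {r : R}.
Hypothesis t_lt_r : t < r.

Lemma outerC_ge0 k m n (y : R) : (0 <= outerC k m r n y)%E.
Proof.
elim: n y => [|n IH] y /=; first by rewrite mule_ge0 ?lee_fin ?expR_ge0 ?innerC_ge0.
by apply: integral_ge0 => z _; exact: IH.
Qed.

Lemma outerC_le k m n (y : R) : 0 <= y ->
  (outerC k m r n y <= ((expR t / t) ^+ (k - 1 - m) * expR t ^+ m / (r - t) ^+ n
      * expR (- (r - t) * y))%:E)%E.
Proof.
have rt_gt0 : 0 < r - t by rewrite subr_gt0.
elim: n y => [|n IH] y y_ge0 /=.
  apply: le_trans (lee_wpmul2l _ (innerC_le k m y y_ge0)) _.
    by rewrite lee_fin expR_ge0.
  rewrite -EFinM lee_fin expr0 divr1 mulrCA -expRD le_eqVlt; apply/orP; left.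
  by apply/eqP; congr (_ * expR _); ring.
apply: le_trans (@integral_itvy_le_expRN _ _ _
  ((expR t / t) ^+ (k - 1 - m) * expR t ^+ m / (r - t) ^+ n) _ rt_gt0 _ _) _.
- by rewrite divr_ge0 ?mulr_ge0 ?exprn_ge0 ?divr_ge0 ?expR_ge0 // ltW.
- by move=> z yz; rewrite outerC_ge0 IH // (le_trans y_ge0).
by rewrite lee_fin exprSr invfM mulrA.
Qed.

End nested_integral_bounds.

Lemma expR_mul1B_le1 {R : realType} (t : R) : expR t * (1 - t) <= 1.
Proof.
have := ler_wpM2l (ltW (expR_gt0 t)) (expR_ge1Dx (- t)).
by rewrite expRN mulfV ?gt_eqF ?expR_gt0.
Qed.

Lemma expR_2Dinv12_div2_ge1 (R : realType) : 1 <= expR (2 + 12^-1) / 2 :> R.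
Proof.
have := expR_ge1Dx (2 + 12^-1 : R).
have : 0 <= 12^-1 :> R by rewrite invr_ge0.
by rewrite ler_pdivlMr //; lra.
Qed.

Lemma expr_div_mul_shift (F : fieldType) (x t w : F) (p q : nat) :
  t != 0 -> w != 0 -> (x / t) ^+ p * x ^+ q / (t * w) ^+ q = (x / t) ^+ (p + q) / w ^+ q.
Proof.
move=> t_neq0 w_neq0; rewrite exprD !expr_div_n exprMn.
by field; rewrite !expf_neq0.
Qed.

Section rate_choice.
Context {R : realType}.
Local Notation e := (expR 1 : R).

Definition Cmkr_rate (r : R) : R := r / (e * r + 2).

Lemma expR1_ge2 : 2 <= e.
Proof. by have := expR_ge1Dx (1 : R); lra. Qed.

Context {r : R}.
Local Notation t := (Cmkr_rate r).

Lemma Cmkr_rate_gt0 : 0 < r -> 0 < t.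
Proof. by move=> r_gt0; rewrite divr_gt0 //; have := expR1_ge2; nra. Qed.

Lemma subr_Cmkr_rate : 0 < r -> r - t = t * (e * r + 1).
Proof.
by move=> r_gt0; rewrite /Cmkr_rate; field; rewrite gt_eqF //; have := expR1_ge2; nra.
Qed.

Lemma Cmkr_le_rate k m : 0 < r -> (m < k)%N ->
  (Cmkr m k r <= ((expR t / t) ^+ (k - 1) / (e * r + 1) ^+ m)%:E)%E.
Proof.
move=> r_gt0 m_lt_k; have er1_gt0 : 0 < e * r + 1 by have := expR1_ge2; nra.
have t_gt0 := Cmkr_rate_gt0 r_gt0.
have t_lt_r : t < r by rewrite -subr_gt0 subr_Cmkr_rate // mulr_gt0.
apply: le_trans (outerC_le t_gt0 t_lt_r k m m 0 (lexx 0)) _.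
rewrite mulr0 expR0 mulr1 lee_fin subr_Cmkr_rate //.
rewrite -[in X in _ <= X](subnK (_ : m <= k - 1)%N); last by lia.
by rewrite expr_div_mul_shift ?gt_eqF.
Qed.

Lemma expR_Cmkr_rate_div_le : 0 < r -> expR t / t <= 2 * (e * r + 1) / r.
Proof.
move=> r_gt0; have e2 := expR1_ge2; have t_gt0 := Cmkr_rate_gt0 r_gt0.
have er2_gt0 : 0 < e * r + 2 by nra.
have t_lt1 : t < 1 by rewrite ltr_pdivrMr // mul1r; nra.
have Qt_ge1 : 1 <= 2 * (e * r + 1) / r * t * (1 - t).
  rewrite /Cmkr_rate -subr_ge0.
  have -> : 2 * (e * r + 1) / r * (r / (e * r + 2)) * (1 - r / (e * r + 2)) - 1 =
     (e * (e - 2) * r ^+ 2 + 2 * (e - 1) * r) / (e * r + 2) ^+ 2.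
    by field; rewrite !gt_eqF.
  by rewrite divr_ge0 ?exprn_ge0 ?addr_ge0 ?mulr_ge0 ?subr_ge0 ?expR_ge0 ?(ltW r_gt0) //; lra.
rewrite ler_pdivrMr // -(ler_pM2r (_ : 0 < 1 - t)) ?subr_gt0 //.
exact: le_trans (expR_mul1B_le1 t) Qt_ge1.
Qed.

End rate_choice.

Local Open Scope ereal_scope.

Theorem lemma6 (R : realType) (r : R) (k m : nat) :
  (0 < r)%R -> (3 <= k)%N -> (m < k)%N ->
  Cmkr m k r <=
  ((expR (2 + 12^-1) / 2) *
   (2 * (expR 1 * r + 1) / r) ^+ (k - 1) *
   (expR 1 * r + 1) ^- m)%:E.
Proof.
move=> r_gt0 _ m_lt_k; apply: le_trans (Cmkr_le_rate k m r_gt0 m_lt_k) _.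
have er1_gt0 : (0 < expR 1 * r + 1)%R by rewrite addr_gt0 // mulr_gt0 ?expR_gt0.
have Q_ge0 : (0 <= 2 * (expR 1 * r + 1) / r)%R.
  by rewrite divr_ge0 ?mulr_ge0 ?(ltW er1_gt0) ?(ltW r_gt0).
have rate_ge0 : (0 <= expR (Cmkr_rate r) / Cmkr_rate r)%R.
  by rewrite divr_ge0 ?expR_ge0 ?(ltW (Cmkr_rate_gt0 r_gt0)).
rewrite lee_fin ler_wpM2r ?invr_ge0 ?exprn_ge0 ?(ltW er1_gt0) //.
apply: le_trans (ler_peMl (exprn_ge0 _ Q_ge0) (expR_2Dinv12_div2_ge1 R)).
exact: lerXn2r (expR_Cmkr_rate_div_le r_gt0).
Qed.
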